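(* Let $\lambda=(\lambda_1,\dots,\lambda_I)$, $\mu=(\mu_1,\dots,\mu_J)$ be partitions of $n$ and $(T_t)_{t\ge0}$ the random transpositions chain on $\mathcal{T}_{\lambda,\mu}$. For $1\le i,k\le I$, $1\le j,l\le J$ and $\mathbf{x}\in\mathcal{T}_{\lambda,\mu}$: if $i\ne k$, $j\ne l$, \[ \mathbb{E}[T_1(i,j)T_1(k,l)\mid T_0=\mathbf{x}]=x_{ij}x_{kl}\left(1-\frac4n+\frac2{n^2}\right)+\frac2{n^2}\left(x_{kl}\lambda_i\mu_j+x_{ij}\lambda_k\mu_l+x_{il}x_{kj}\right); \] if $i\ne k$, $j=l$, \[ \mathbb{E}[T_1(i,j)T_1(k,j)\mid T_0=\mathbf{x}]=x_{ij}x_{kj}\left(1-\frac4n+\frac4{n^2}\right)+\frac2{n^2}\left(x_{kj}(\lambda_i\mu_j-\lambda_i)+x_{ij}(\lambda_k\mu_j-\lambda_k)\right); \] if $i=k$, $j=l$, \[ \mathbb{E}[T_1(i,j)^2\mid T_0=\mathbf{x}]=x_{ij}^2\left(1-\frac4n+\frac4{n^2}\right)+\frac2{n^2}\left(x_{ij}(2\lambda_i\mu_j-2\lambda_i-2\mu_j+n)+\lambda_i\mu_j\right). \]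
   Context: $\mathcal{T}_{\lambda,\mu}$ is the set of $I\times J$ nonnegative integer tables $\mathbf{x}=(x_{ij})$ with row sums $\lambda_i$ and column sums $\mu_j$; $T_t(i,j)$ is the $(i,j)$ entry at time $t$. The random transpositions chain: for $T'$ obtained from $T$ by subtracting $1$ at cells $(i_1,j_1),(i_2,j_2)$ and adding $1$ at $(i_1,j_2),(i_2,j_1)$ (with $i_1\ne i_2$, $j_1\ne j_2$), $P(T,T')=2T_{i_1j_1}T_{i_2j_2}/n^2$; $P(T,T)$ is the remaining mass. *)

From mathcomp Require Import all_boot all_order all_algebra.
Set Implicit Arguments. Unset Strict Implicit. Unset Printing Implicit Defensive.
Import Order.TTheory GRing.Theory Num.Theory.
Local Open Scope ring_scope.

Definition is_partition (I n : nat) (lam : 'I_I -> nat) : Prop :=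
  [/\ (\sum_(i < I) lam i)%N = n,
      (forall i, (0 < lam i)%N) &
      (forall i j : 'I_I, (i <= j)%N -> (lam j <= lam i)%N)].

(* An I x J table with nonnegative integer entries; entries are bounded by n
   (automatic for tables with margins summing to n). *)
Definition table (I J n : nat) := {ffun 'I_I * 'I_J -> 'I_n.+1}.

Definition ent (I J n : nat) (T : table I J n) (i : 'I_I) (j : 'I_J) : nat :=
  nat_of_ord (T (i, j)).

Definition tables (I J n : nat) (lam : 'I_I -> nat) (mu : 'I_J -> nat)
  : {set table I J n} :=
  [set T : table I J n | [forall i, (\sum_(j < J) ent T i j == lam i)%N]
                      && [forall j, (\sum_(i < I) ent T i j == mu j)%N]].

Definition is_move (I J n : nat) (T : table I J n)
  (q : 'I_I * 'I_J * 'I_I * 'I_J) (T' : table I J n) : bool :=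
  let: (i1, j1, i2, j2) := q in
  [&& i1 != i2, j1 != j2 &
   [forall a, forall b,
     (ent T' a b + ((a == i1) && (b == j1)) + ((a == i2) && (b == j2)))%N
     == (ent T a b + ((a == i1) && (b == j2)) + ((a == i2) && (b == j1)))%N]].

Definition rt_off (R : fieldType) (I J n : nat) (T T' : table I J n) : R :=
  match [pick q | is_move T q T'] with
  | Some q => let: (i1, j1, i2, j2) := q in
      2 * (ent T i1 j1)%:R * (ent T i2 j2)%:R / (n%:R ^+ 2)
  | None => 0
  end.

Definition rt_P (R : fieldType) (I J n : nat) (lam : 'I_I -> nat)
  (mu : 'I_J -> nat) (T T' : table I J n) : R :=
  if T' == T then
    1 - \sum_(T'' in tables n lam mu | T'' != T) rt_off R T T''
  else rt_off R T T'.

Definition rt_E (R : fieldType) (I J n : nat) (lam : 'I_I -> nat)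
  (mu : 'I_J -> nat) (x : table I J n) (f : table I J n -> R) : R :=
  \sum_(T' in tables n lam mu) rt_P R lam mu x T' * f T'.

(* A move q = (i1, j1, i2, j2) adds the increment
   shift q = (e_i1 - e_i2) (e_j2 - e_j1)^T to the table and has probability
   x_{i1 j1} x_{i2 j2} / n^2.  Hence
     E[T_1(a,b) T_1(c,d)] - x_ab x_cd
       = n^-2 sum_q x_{i1 j1} x_{i2 j2} (x_ab shift_cd + x_cd shift_ab + shift_ab shift_cd),
   and once the shifts are expanded into indicators every such weighted sum
   factors into sums sum_{r,s} x_rs phi(r, s) with phi an indicator of a row, a
   column or a cell, i.e. into n, the margins and the entries of x. *)

From mathcomp Require Import all_boot all_order all_algebra.
From mathcomp Require Import zify ring.
Set Implicit Arguments. Unset Strict Implicit. Unset Printing Implicit Defensive.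
Import Order.TTheory GRing.Theory Num.Theory.
Local Open Scope ring_scope.

Local Ltac simpl_eqs := repeat match goal with
  | H : is_true (?u != ?u) |- _ => by rewrite eqxx in H
  | H : is_true (?u != ?v) |- context [?u == ?v] => rewrite (negbTE H)
  | H : is_true (?u != ?v) |- context [?v == ?u] => rewrite [v == u]eq_sym (negbTE H)
  | |- context [?u == ?u] => rewrite eqxx
  end.

Local Ltac cell_cases a b i1 i2 j1 j2 :=
  case: (eqVneq a i1) => ?; case: (eqVneq a i2) => ?;
  case: (eqVneq b j1) => ?; case: (eqVneq b j2) => ?; subst; simpl_eqs;
  rewrite ?andbT ?andbF ?andTb ?andFb /=.

Section RandomTranspositions.
Variables (R : fieldType) (n I J : nat) (lam : 'I_I -> nat) (mu : 'I_J -> nat).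
Variable x : table I J n.
Hypothesis x_tab : x \in tables n lam mu.
Hypothesis sum_lam : (\sum_(i < I) lam i)%N = n.

Local Notation quad := ('I_I * 'I_J * 'I_I * 'I_J)%type.

(* Truncated subtraction: this is the entry of [move q] only when [movable q]. *)
Definition move_entry (q : quad) (a : 'I_I) (b : 'I_J) : nat :=
  let: (i1, j1, i2, j2) := q in
  (ent x a b + ((a == i1) && (b == j2)) + ((a == i2) && (b == j1))
   - ((a == i1) && (b == j1)) - ((a == i2) && (b == j2)))%N.

Definition move (q : quad) : table I J n :=
  [ffun ab => inord (move_entry q ab.1 ab.2)].

Definition movable (q : quad) : bool :=
  let: (i1, j1, i2, j2) := q in
  [&& i1 != i2, j1 != j2, (0 < ent x i1 j1)%N & (0 < ent x i2 j2)%N].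

Definition swap_quad (q : quad) : quad :=
  let: (i1, j1, i2, j2) := q in (i2, j2, i1, j1).

Definition move_weight (q : quad) : R :=
  let: (i1, j1, i2, j2) := q in (ent x i1 j1)%:R * (ent x i2 j2)%:R.

Lemma ent_row_le a b b' : b != b' -> (ent x a b + ent x a b' <= n)%N.
Proof.
move=> neq_bb'; move: x_tab; rewrite inE => /andP[/forallP row_sum _].
have lam_le : (lam a <= n)%N by rewrite -sum_lam (bigD1 a) //= leq_addr.
move: (eqP (row_sum a)); rewrite (bigD1 b) //= (bigD1 b') /=; last by rewrite eq_sym.
lia.
Qed.

Lemma move_entry_le q a b : movable q -> (move_entry q a b <= n)%N.
Proof.
case: q => [[[i1 j1] i2] j2] /and4P[ne_i ne_j pos1 pos2] /=.
move: pos1 pos2 (ent_row_le i1 ne_j) (ent_row_le i2 ne_j) (ltn_ord (x (a, b))).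
rewrite -/(ent x a b); cell_cases a b i1 i2 j1 j2; lia.
Qed.

Lemma ent_move q a b : movable q -> ent (move q) a b = move_entry q a b.
Proof. by move=> mq; rewrite /ent ffunE inordK // ltnS move_entry_le. Qed.

Lemma is_move_move q : movable q -> is_move x q (move q).
Proof.
move=> mq; have := mq; case: q mq => [[[i1 j1] i2] j2] mq /and4P[ne_i ne_j x1 x2].
rewrite /is_move ne_i ne_j; apply/forallP => a; apply/forallP => b.
rewrite ent_move //=; apply/eqP; cell_cases a b i1 i2 j1 j2; lia.
Qed.

Lemma move_entry_is_move q T' a b : is_move x q T' -> move_entry q a b = ent T' a b.
Proof.
case: q => [[[i1 j1] i2] j2] /and3P[_ _ /forallP eqT].
by rewrite /move_entry -(eqP (forallP (eqT a) b)) -subnDA -addnA addnK.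
Qed.

Lemma is_moveP q T' : is_move x q T' = movable q && (T' == move q).
Proof.
apply/idP/idP => [|/andP[mq /eqP ->]]; last exact: is_move_move.
case: q => [[[i1 j1] i2] j2] mv; have /and3P[ne_i ne_j /forallP eqT'] := mv.
have eq_ab a b := eqP (forallP (eqT' a) b).
have mq : movable (i1, j1, i2, j2).
  by rewrite /= ne_i ne_j /=; move: (eq_ab i1 j1) (eq_ab i2 j2); simpl_eqs; lia.
rewrite mq; apply/eqP/ffunP => -[a b]; apply: val_inj.
by rewrite ffunE (move_entry_is_move a b mv) /= inordK ?ltn_ord.
Qed.

Lemma is_move_swap q T' : is_move x (swap_quad q) T' = is_move x q T'.
Proof.
case: q => [[[i1 j1] i2] j2]; rewrite /is_move /= [i2 == i1]eq_sym [j2 == j1]eq_sym.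
congr [&& _, _ & _]; apply: eq_forallb => a; apply: eq_forallb => b.
by rewrite [X in X == _]addnAC [X in _ == X]addnAC.
Qed.

Lemma is_move_ltn q T' a b : is_move x q T' ->
  (ent T' a b < ent x a b)%N =
  let: (i1, j1, i2, j2) := q in ((a == i1) && (b == j1)) || ((a == i2) && (b == j2)).
Proof.
case: q => [[[i1 j1] i2] j2] /and3P[ne_i ne_j /forallP eqT].
move: (eqP (forallP (eqT a) b)); cell_cases a b i1 i2 j1 j2; lia.
Qed.

Lemma is_move_uniq q q' T' : is_move x q T' -> is_move x q' T' ->
  q' = q \/ q' = swap_quad q.
Proof.
case: q => [[[i1 j1] i2] j2]; case: q' => [[[k1 l1] k2] l2] mv mv'.
have [ne_i _ _] := and3P mv.
have hit a b : ((a == i1) && (b == j1)) || ((a == i2) && (b == j2)) ->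
               ((a == k1) && (b == l1)) || ((a == k2) && (b == l2)).
  by rewrite -(is_move_ltn a b mv) (is_move_ltn a b mv').
have := hit i1 j1; have := hit i2 j2; rewrite !eqxx orbT => /(_ isT) + /(_ isT).
case/orP=> /andP[/eqP <- /eqP <-]; case/orP=> /andP[/eqP ? /eqP ?]; subst;
  by [left | right | rewrite eqxx in ne_i].
Qed.

Lemma swap_quad_neq q T' : is_move x q T' -> swap_quad q != q.
Proof.
by case: q => [[[i1 j1] i2] j2] /and3P[ne_i _ _]; rewrite !xpair_eqE eq_sym (negbTE ne_i).
Qed.

(* Each transposition is counted by its two orderings [q] and [swap_quad q]. *)
Lemma rt_off_sum T' :
  rt_off R x T' = \sum_(q | is_move x q T') move_weight q / n%:R ^+ 2.
Proof.
rewrite /rt_off; case: pickP => [q mv | no_move]; last by rewrite big_pred0.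
have mv_swap : is_move x (swap_quad q) T' by rewrite is_move_swap.
rewrite (bigD1 q) // (bigD1 (swap_quad q)) /=; last by rewrite mv_swap (swap_quad_neq mv).
rewrite big_pred0 => [|q']; last first.
  case mv': (is_move x q' T') => //=.
  by case: (is_move_uniq mv mv') => ->; rewrite eqxx ?andbF.
by case: q {mv mv_swap} => [[[i1 j1] i2] j2] /=; rewrite addr0 mulrC; ring.
Qed.

Lemma sum_nat_andb_eq (T : finType) (c : bool) (t : T) : (\sum_s (c && (s == t)))%N = c.
Proof. by rewrite (bigD1 t) //= eqxx andbT big1 ?addn0 // => s /negbTE ->; rewrite andbF. Qed.

Lemma sum_nat_eq_andb (T : finType) (c : bool) (t : T) : (\sum_s ((s == t) && c))%N = c.
Proof. by rewrite (bigD1 t) //= eqxx big1 ?addn0 // => s /negbTE ->. Qed.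

Lemma move_in_tables q : movable q -> move q \in tables n lam mu.
Proof.
move=> mq; have := is_move_move mq; move: x_tab; rewrite !inE.
case: q {mq} => [[[i1 j1] i2] j2] /andP[/forallP rows /forallP cols] /and3P[_ _ /forallP eqT].
have e a b := eqP (forallP (eqT a) b).
apply/andP; split; apply/forallP; [move=> a | move=> b].
- rewrite -(eqP (rows a)).
  have := @eq_bigr _ 0%N addn _ (index_enum _) xpredT _ _ (fun b _ => e a b).
  by rewrite !big_split /= !sum_nat_andb_eq; lia.
- rewrite -(eqP (cols b)).
  have := @eq_bigr _ 0%N addn _ (index_enum _) xpredT _ _ (fun a _ => e a b).
  by rewrite !big_split /= !sum_nat_eq_andb; lia.
Qed.

Lemma move_neq q : movable q -> move q != x.
Proof.
move=> mq; apply/eqP => eq_x; have := is_move_move mq; rewrite eq_x.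
case: q {mq eq_x} => [[[i1 j1] i2] j2] /and3P[ne_i ne_j /forallP eqT].
by move: (eqP (forallP (eqT i1) j1)); simpl_eqs; lia.
Qed.

Lemma rt_E_moves (f : table I J n -> R) : rt_E lam mu x f =
  f x + \sum_(q | movable q) move_weight q / n%:R ^+ 2 * (f (move q) - f x).
Proof.
rewrite /rt_E (bigD1 x) //= /rt_P eqxx.
rewrite [X in _ + X](eq_bigr (fun T' => rt_off R x T' * f T')) => [|T' /andP[_ /negbTE ->] //].
rewrite mulrBl mul1r mulr_suml -addrA; congr (_ + _); rewrite addrC -sumrB.
rewrite (eq_bigr (fun T' => \sum_(q | is_move x q T') move_weight q / n%:R ^+ 2 * (f T' - f x)))
  => [|T' _]; last by rewrite -mulrBr rt_off_sum mulr_suml.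
rewrite (exchange_big_dep movable) => [|T' q _]; last by rewrite is_moveP => /andP[].
apply: eq_bigr => q mq; rewrite (big_pred1 (move q)) // => T'.
rewrite is_moveP mq /=; case: (eqVneq T' (move q)) => [->|_]; last by rewrite andbF.
by rewrite move_in_tables // move_neq.
Qed.

Local Notation X a b := ((ent x a b)%:R : R).

Definition shift (q : quad) (a : 'I_I) (b : 'I_J) : R :=
  let: (i1, j1, i2, j2) := q in
  ((a == i1)%:R - (a == i2)%:R) * ((b == j2)%:R - (b == j1)%:R).

Lemma ent_move_shift q a b : movable q -> (ent (move q) a b)%:R = X a b + shift q a b.
Proof.
move=> mq; have := is_move_move mq.
case: q {mq} => [[[i1 j1] i2] j2] /and3P[_ _ /forallP eqT].
move: (congr1 (fun k => k%:R : R) (eqP (forallP (eqT a) b))).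
rewrite /= !natrD -!mulnb !natrM => eq_ab.
by apply: (addIr ((a == i1)%:R * (b == j1)%:R + (a == i2)%:R * (b == j2)%:R));
  rewrite addrA eq_ab; ring.
Qed.

Lemma move_weight_shift_eq0 q a b : ~~ movable q -> move_weight q * shift q a b = 0.
Proof.
case: q => [[[i1 j1] i2] j2] /=.
case/nandP => [/negPn/eqP <- | /nandP[/negPn/eqP <- | /nandP[|]]];
  rewrite ?subrr ?mul0r ?mulr0 //; rewrite lt0n negbK => /eqP ->.
- by rewrite !mul0r.
- by rewrite mulr0 mul0r.
Qed.

Lemma rt_E_ent_mul_shift a b c d :
  rt_E lam mu x (fun T => (ent T a b)%:R * (ent T c d)%:R) = X a b * X c d +
  (n%:R ^+ 2)^-1 * (X a b * \sum_q move_weight q * shift q c d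
                    + X c d * \sum_q move_weight q * shift q a b
                    + \sum_q move_weight q * (shift q a b * shift q c d)).
Proof.
rewrite rt_E_moves; congr (_ + _).
rewrite !mulr_sumr -!big_split /= mulr_sumr big_mkcond.
apply: eq_bigr => q _; case: ifP => [mq | /negbT nmq].
  by rewrite !ent_move_shift //; ring.
have := move_weight_shift_eq0 a b nmq; have := move_weight_shift_eq0 c d nmq.
by rewrite [move_weight q * (_ * _)]mulrA => -> ->; rewrite !(mulr0, mul0r, addr0).
Qed.

Definition quad_sum (F : 'I_I -> 'I_J -> 'I_I -> 'I_J -> R) : R :=
  \sum_i1 \sum_j1 \sum_i2 \sum_j2 F i1 j1 i2 j2.

Lemma sum_quad_nested (F : quad -> R) :
  \sum_q F q = quad_sum (fun i1 j1 i2 j2 => F (i1, j1, i2, j2)).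
Proof. by rewrite /quad_sum !pair_bigA; apply: eq_bigr => -[[[? ?] ?] ?]. Qed.

Lemma quad_sumE F :
  quad_sum F = \sum_(q : quad) F q.1.1.1 q.1.1.2 q.1.2 q.2.
Proof. by rewrite sum_quad_nested. Qed.

Lemma eq_quad_sum F G : (forall i1 j1 i2 j2, F i1 j1 i2 j2 = G i1 j1 i2 j2) ->
  quad_sum F = quad_sum G.
Proof. by move=> eqFG; rewrite !quad_sumE; apply: eq_bigr. Qed.

Lemma quad_sumD F G :
  quad_sum (fun i1 j1 i2 j2 => F i1 j1 i2 j2 + G i1 j1 i2 j2) = quad_sum F + quad_sum G.
Proof. by rewrite !quad_sumE -big_split. Qed.

Lemma quad_sumB F G :
  quad_sum (fun i1 j1 i2 j2 => F i1 j1 i2 j2 - G i1 j1 i2 j2) = quad_sum F - quad_sum G.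
Proof. by rewrite !quad_sumE -sumrB. Qed.

Lemma quad_sumZ k F :
  quad_sum (fun i1 j1 i2 j2 => k * F i1 j1 i2 j2) = k * quad_sum F.
Proof. by rewrite !quad_sumE mulr_sumr. Qed.

Definition xsum (phi : 'I_I -> 'I_J -> R) : R := \sum_r \sum_s X r s * phi r s.

Lemma quad_sum_mul phi psi :
  quad_sum (fun i1 j1 i2 j2 => (X i1 j1 * phi i1 j1) * (X i2 j2 * psi i2 j2))
  = xsum phi * xsum psi.
Proof.
rewrite /quad_sum /xsum mulr_suml; apply: eq_bigr => i1 _; rewrite mulr_suml.
by apply: eq_bigr => j1 _; rewrite mulr_sumr; apply: eq_bigr => i2 _; rewrite mulr_sumr.
Qed.

Lemma sum_mul_eq (T : finType) (F : T -> R) (t : T) : \sum_s F s * (t == s)%:R = F t.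
Proof.
rewrite (bigD1 t) //= eqxx mulr1 big1 ?addr0 // => s ne_st.
by rewrite eq_sym (negbTE ne_st) mulr0.
Qed.

Lemma sum_row a : \sum_s X a s = (lam a)%:R.
Proof. by move: x_tab; rewrite inE -natr_sum => /andP[/forallP/(_ a)/eqP ->]. Qed.

Lemma sum_col b : \sum_r X r b = (mu b)%:R.
Proof. by move: x_tab; rewrite inE -natr_sum => /andP[_ /forallP/(_ b)/eqP ->]. Qed.

Lemma xsum1 : xsum (fun _ _ => 1) = n%:R.
Proof.
rewrite /xsum; under eq_bigr do under eq_bigr do rewrite mulr1.
by under eq_bigr do rewrite sum_row; rewrite -natr_sum sum_lam.
Qed.

Lemma xsum_row a : xsum (fun r _ => (a == r)%:R) = (lam a)%:R.
Proof. by rewrite /xsum; under eq_bigr do rewrite -mulr_suml sum_row; rewrite sum_mul_eq. Qed.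

Lemma xsum_col b : xsum (fun _ s => (b == s)%:R) = (mu b)%:R.
Proof. by rewrite /xsum exchange_big; under eq_bigr do rewrite -mulr_suml sum_col; rewrite sum_mul_eq. Qed.

Lemma xsum_cell a b : xsum (fun r s => (a == r)%:R * (b == s)%:R) = X a b.
Proof.
rewrite /xsum; under eq_bigr do under eq_bigr do rewrite mulrA.
by under eq_bigr do rewrite sum_mul_eq; rewrite sum_mul_eq.
Qed.

Lemma sum_weight_shift a b : \sum_q move_weight q * shift q a b =
  2 * ((lam a)%:R * (mu b)%:R - n%:R * X a b).
Proof.
rewrite sum_quad_nested (@eq_quad_sum _ (fun i1 j1 i2 j2 =>
    (X i1 j1 * (a == i1)%:R) * (X i2 j2 * (b == j2)%:R)
  + (X i1 j1 * (b == j1)%:R) * (X i2 j2 * (a == i2)%:R)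
  - ((X i1 j1 * ((a == i1)%:R * (b == j1)%:R)) * (X i2 j2 * 1)
    + (X i1 j1 * 1) * (X i2 j2 * ((a == i2)%:R * (b == j2)%:R))))) => [|i1 j1 i2 j2].
  by rewrite quad_sumB !quad_sumD !quad_sum_mul xsum1 xsum_row xsum_col xsum_cell; ring.
by rewrite /=; ring.
Qed.

Lemma mul_indicator_diff (T : eqType) (a c r s : T) :
  ((a == r)%:R - (a == s)%:R) * ((c == r)%:R - (c == s)%:R) =
  (a == c)%:R * ((a == r)%:R + (a == s)%:R)
  - (a == r)%:R * (c == s)%:R - (a == s)%:R * (c == r)%:R :> R.
Proof.
case: (eqVneq a c) => [<- | ne_ac].
  by case: (a == r); case: (a == s); rewrite /=; ring.
have disj t : (a == t)%:R * (c == t)%:R = 0 :> R.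
  by case: (eqVneq a t) => [<- | _]; rewrite ?mul0r // eq_sym (negbTE ne_ac) mulr0.
transitivity ((a == r)%:R * (c == r)%:R + (a == s)%:R * (c == s)%:R
              - (a == r)%:R * (c == s)%:R - (a == s)%:R * (c == r)%:R :> R); first by ring.
by rewrite !disj /=; ring.
Qed.

Lemma sum_weight_shift2 a b c d :
  \sum_q move_weight q * (shift q a b * shift q c d) =
  2 * ((a == c)%:R * (b == d)%:R * ((lam a)%:R * (mu b)%:R + n%:R * X a b)
       - (a == c)%:R * (X a d * (mu b)%:R + X a b * (mu d)%:R)
       - (b == d)%:R * ((lam a)%:R * X c b + (lam c)%:R * X a b)
       + X a d * X c b + X a b * X c d).
Proof.
(* By [mul_indicator_diff], each term separates into a function of (i1, j1)
   times a function of (i2, j2). *)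
rewrite sum_quad_nested (@eq_quad_sum _ (fun i1 j1 i2 j2 =>
    (a == c)%:R * (b == d)%:R *
      ((X i1 j1 * ((a == i1)%:R * (b == j1)%:R)) * (X i2 j2 * 1)
     + (X i1 j1 * (a == i1)%:R) * (X i2 j2 * (b == j2)%:R)
     + (X i1 j1 * (b == j1)%:R) * (X i2 j2 * (a == i2)%:R)
     + (X i1 j1 * 1) * (X i2 j2 * ((a == i2)%:R * (b == j2)%:R)))
  - (a == c)%:R *
      ((X i1 j1 * ((a == i1)%:R * (b == j1)%:R)) * (X i2 j2 * (d == j2)%:R)
     + (X i1 j1 * ((a == i1)%:R * (d == j1)%:R)) * (X i2 j2 * (b == j2)%:R)
     + (X i1 j1 * (b == j1)%:R) * (X i2 j2 * ((a == i2)%:R * (d == j2)%:R))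
     + (X i1 j1 * (d == j1)%:R) * (X i2 j2 * ((a == i2)%:R * (b == j2)%:R)))
  - (b == d)%:R *
      ((X i1 j1 * ((a == i1)%:R * (b == j1)%:R)) * (X i2 j2 * (c == i2)%:R)
     + (X i1 j1 * (a == i1)%:R) * (X i2 j2 * ((c == i2)%:R * (b == j2)%:R))
     + (X i1 j1 * ((c == i1)%:R * (b == j1)%:R)) * (X i2 j2 * (a == i2)%:R)
     + (X i1 j1 * (c == i1)%:R) * (X i2 j2 * ((a == i2)%:R * (b == j2)%:R)))
  + ((X i1 j1 * ((a == i1)%:R * (b == j1)%:R)) * (X i2 j2 * ((c == i2)%:R * (d == j2)%:R))
     + (X i1 j1 * ((a == i1)%:R * (d == j1)%:R)) * (X i2 j2 * ((c == i2)%:R * (b == j2)%:R))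
     + (X i1 j1 * ((c == i1)%:R * (b == j1)%:R)) * (X i2 j2 * ((a == i2)%:R * (d == j2)%:R))
     + (X i1 j1 * ((c == i1)%:R * (d == j1)%:R)) * (X i2 j2 * ((a == i2)%:R * (b == j2)%:R)))))
  => [|i1 j1 i2 j2].
  rewrite quad_sumD !quad_sumB !quad_sumZ !quad_sumD !quad_sum_mul.
  by rewrite xsum1 !xsum_row !xsum_col !xsum_cell; ring.
rewrite /= [in Z in _ * Z]mulrACA (mul_indicator_diff a c) (mul_indicator_diff b d).
ring.
Qed.

Lemma rt_E_ent_mul a b c d :
  rt_E lam mu x (fun T => (ent T a b)%:R * (ent T c d)%:R) =
  X a b * X c d + 2 / n%:R ^+ 2 *
    (X a b * ((lam c)%:R * (mu d)%:R - n%:R * X c d)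
     + X c d * ((lam a)%:R * (mu b)%:R - n%:R * X a b)
     + (a == c)%:R * (b == d)%:R * ((lam a)%:R * (mu b)%:R + n%:R * X a b)
     - (a == c)%:R * (X a d * (mu b)%:R + X a b * (mu d)%:R)
     - (b == d)%:R * ((lam a)%:R * X c b + (lam c)%:R * X a b)
     + X a d * X c b + X a b * X c d).
Proof. by rewrite rt_E_ent_mul_shift !sum_weight_shift sum_weight_shift2; ring. Qed.

End RandomTranspositions.

Theorem lemma3p4 (R : realFieldType) (n I J : nat)
  (lam : 'I_I -> nat) (mu : 'I_J -> nat) :
  is_partition n lam -> is_partition n mu ->
  forall x : table I J n, x \in tables n lam mu ->
  forall (i k : 'I_I) (j l : 'I_J),
  let N : R := n%:R in
  let X (a : 'I_I) (b : 'I_J) : R := (ent x a b)%:R in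
  let L (a : 'I_I) : R := (lam a)%:R in
  let M (b : 'I_J) : R := (mu b)%:R in
  [/\ (i != k -> j != l ->
        rt_E lam mu x (fun T => (ent T i j)%:R * (ent T k l)%:R)
        = X i j * X k l * (1 - 4 / N + 2 / N ^+ 2)
          + 2 / N ^+ 2 * (X k l * L i * M j + X i j * L k * M l
                          + X i l * X k j)),
      (i != k ->
        rt_E lam mu x (fun T => (ent T i j)%:R * (ent T k j)%:R)
        = X i j * X k j * (1 - 4 / N + 4 / N ^+ 2)
          + 2 / N ^+ 2 * (X k j * (L i * M j - L i)
                          + X i j * (L k * M j - L k))) &
      rt_E lam mu x (fun T => (ent T i j)%:R ^+ 2)
        = X i j ^+ 2 * (1 - 4 / N + 4 / N ^+ 2)
          + 2 / N ^+ 2 * (X i j * (2 * L i * M j - 2 * L i - 2 * M j + N)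
                          + L i * M j)].
Proof.
move=> [sum_lam lam_pos _] _ x x_tab i k j l N X L M.
rewrite {}/N {}/X {}/L {}/M.
have n_neq0 : n%:R != 0 :> R.
  by rewrite pnatr_eq0 -lt0n -sum_lam (bigD1 i) //= ltn_addr ?lam_pos.
split => [ne_ik ne_jl | ne_ik |].
- by rewrite rt_E_ent_mul // (negbTE ne_ik) (negbTE ne_jl) /=; field.
- by rewrite rt_E_ent_mul // (negbTE ne_ik) eqxx /=; field.
- by rewrite (rt_E_ent_mul R x_tab sum_lam i j i j) !eqxx /=; field.
Qed.
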